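(* Let $(\Phi,D)$ be a domain-free information algebra whose lattice $D$ has a top element. (1) $(\Phi,D)$ is continuous (resp. compact) if and only if $(\Phi,\le)$ is a continuous lattice (resp. an algebraic lattice). (2) $(\Phi,D)$ is s-continuous if and only if $(\Phi,\le)$ is a complete lattice and for all $\phi\in\Phi$ and $x\in D$, $\phi^{\Rightarrow x}=\vee\{\psi\in\Phi:\psi=\psi^{\Rightarrow x}\ll\phi\}$; and $(\Phi,D)$ is s-compact if and only if $(\Phi,\le)$ is a complete lattice and for all $\phi\in\Phi$ and $x\in D$, $\phi^{\Rightarrow x}=\vee\{\psi\in\Phi_f:\psi=\psi^{\Rightarrow x}\le\phi\}$.
   Context: A domain-free information algebra $(\Phi,D)$ consists of a set $\Phi$, a lattice $D$, a combination $\otimes:\Phi\times\Phi\to\Phi$ and a focusing $\Phi\times D\to\Phi$, $(\psi,x)\mapsto\psi^{\Rightarrow x}$, such that: (1) $\otimes$ is associative and commutative and has a neutral element $e$; (2) $(\psi^{\Rightarrow y})^{\Rightarrow x}=\psi^{\Rightarrow x\wedge y}$; (3) $(\phi^{\Rightarrow x}\otimes\psi)^{\Rightarrow x}=\phi^{\Rightarrow x}\otimes\psi^{\Rightarrow x}$; (4) for every $\psi$ there is $x\in D$ with $\psi^{\Rightarrow x}=\psi$; (5) $\psi\otimes\psi^{\Rightarrow x}=\psi$. $\Phi$ is ordered by $\psi\le\phi$ iff $\psi\otimes\phi=\phi$; suprema are with respect to this order. $a\ll b$ means: for every directed $X$ with $b\le\vee X$ there is $c\in X$ with $a\le c$; $\Phi_f=\{\phi\in\Phi:\phi\ll\phi\}$.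 A complete lattice $L$ is continuous if $a=\vee\{b:b\ll a\}$ for all $a$, and algebraic if $a=\vee\{b:b\ll b\le a\}$ for all $a$. $(\Phi,D)$ is called continuous (resp. s-continuous) if there is $\Gamma\subseteq\Phi$, closed under combination and containing $e$, such that (convergency) every directed $X\subseteq\Gamma$ has a supremum in $\Phi$, and (density) $\phi=\vee\{\psi\in\Gamma:\psi\ll\phi\}$ for all $\phi$ (resp. (strong density) $\phi^{\Rightarrow x}=\vee\{\psi\in\Gamma:\psi=\psi^{\Rightarrow x}\ll\phi\}$ for all $\phi,x$). It is called compact (resp. s-compact) if such a $\Gamma$ additionally satisfies (compactness): for every directed $X\subseteq\Gamma$ and $\phi\in\Gamma$ with $\phi\le\vee X$ there is $\psi\in X$ with $\phi\le\psi$. *)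

From HB Require Import structures.
From mathcomp Require Import all_boot all_order.
Set Implicit Arguments. Unset Strict Implicit. Unset Printing Implicit Defensive.
Import Order.TTheory.
Local Open Scope order_scope.

Section InfoAlgebra.
Context {disp : Order.disp_t} {D : latticeType disp} {Phi : Type}.
Variables (comb : Phi -> Phi -> Phi) (e : Phi) (foc : Phi -> D -> Phi).

Record info_algebra : Prop := {
  comb_assoc : forall a b c, comb a (comb b c) = comb (comb a b) c;
  comb_comm  : forall a b, comb a b = comb b a;
  comb_neutral : forall a, comb e a = a;
  foc_foc : forall psi x y, foc (foc psi y) x = foc psi (x `&` y);
  foc_comb : forall phi psi x, foc (comb (foc phi x) psi) x = comb (foc phi x) (foc psi x);
  foc_support : forall psi, exists x, foc psi x = psi;
  foc_idem : forall psi x, comb psi (foc psi x) = psi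
}.

Definition ia_le (psi phi : Phi) : Prop := comb psi phi = phi.

Definition is_sup (X : Phi -> Prop) (s : Phi) : Prop :=
  (forall a, X a -> ia_le a s) /\ (forall u, (forall a, X a -> ia_le a u) -> ia_le s u).

Definition directed (X : Phi -> Prop) : Prop :=
  (exists a, X a) /\
  (forall a b, X a -> X b -> exists c, X c /\ ia_le a c /\ ia_le b c).

Definition way_below (a b : Phi) : Prop :=
  forall X s, directed X -> is_sup X s -> ia_le b s -> exists c, X c /\ ia_le a c.

Definition finite_elt (phi : Phi) : Prop := way_below phi phi.

Definition complete_lattice : Prop := forall X : Phi -> Prop, exists s, is_sup X s.

Definition continuous_lattice : Prop :=
  complete_lattice /\ forall a, is_sup (fun b => way_below b a) a.

Definition algebraic_lattice : Prop :=
  complete_lattice /\ forall a, is_sup (fun b => way_below b b /\ ia_le b a) a.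

Definition gamma_ok (G : Phi -> Prop) : Prop :=
  G e /\ (forall a b, G a -> G b -> G (comb a b)).

Definition convergency (G : Phi -> Prop) : Prop :=
  forall X, (forall a, X a -> G a) -> directed X -> exists s, is_sup X s.

Definition density (G : Phi -> Prop) : Prop :=
  forall phi, is_sup (fun psi => G psi /\ way_below psi phi) phi.

Definition strong_density (G : Phi -> Prop) : Prop :=
  forall phi x, is_sup (fun psi => G psi /\ psi = foc psi x /\ way_below psi phi) (foc phi x).

Definition compactness (G : Phi -> Prop) : Prop :=
  forall X s phi, (forall a, X a -> G a) -> directed X -> is_sup X s ->
    G phi -> ia_le phi s -> exists psi, X psi /\ ia_le phi psi.

Definition ia_continuous : Prop :=
  exists G, gamma_ok G /\ convergency G /\ density G.
Definition ia_s_continuous : Prop :=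
  exists G, gamma_ok G /\ convergency G /\ strong_density G.
Definition ia_compact : Prop :=
  exists G, gamma_ok G /\ convergency G /\ density G /\ compactness G.
Definition ia_s_compact : Prop :=
  exists G, gamma_ok G /\ convergency G /\ strong_density G /\ compactness G.

End InfoAlgebra.

(* The order [psi <= phi <-> psi (x) phi = phi] makes [Phi] a join-semilattice with
   bottom [e] and join [comb].  If [Gamma] is dense, an element is the least upper bound
   of the [Gamma]-elements way below it; so for an arbitrary family [X], the
   [Gamma]-elements lying below every upper bound of [X] form a directed set (as [Gamma]
   is closed under combination) whose supremum, given by convergency, is the supremum of
   [X]: the algebra is a complete lattice.  If moreover [Gamma] is compact, each
   [g] in [Gamma] is finite: for directed [X] with [g <= \/X], the [Gamma]-elements below
   some member of [X] form a directed set whose supremum dominates [\/X], and compactness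
   puts [g] below one of them.  Conversely, for a continuous (resp. algebraic) lattice
   one takes [Gamma = Phi] (resp. the finite elements).  Since [D] has a top,
   [phi^{=> top} = phi], so strong density implies density and the s-variants follow
   the same pattern. *)
From mathcomp Require Import all_boot all_order.
Set Implicit Arguments. Unset Strict Implicit.
Import Order.TTheory.
Local Open Scope order_scope.

Lemma is_sup_ext {Phi : Type} (comb : Phi -> Phi -> Phi) (X Y : Phi -> Prop) s :
  (forall a, X a <-> Y a) -> is_sup comb X s -> is_sup comb Y s.
Proof.
move=> XY [ub least]; split=> [a /XY|u uY]; first exact: ub.
by apply: least => a /XY; apply: uY.
Qed.

Definition dense_below {Phi : Type} (comb : Phi -> Phi -> Phi) (G : Phi -> Prop) : Prop :=
  forall a u, (forall g, G g -> way_below comb g a -> ia_le comb g u) -> ia_le comb a u.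

Lemma density_dense_below {Phi : Type} (comb : Phi -> Phi -> Phi) G :
  density comb G -> dense_below comb G.
Proof. by move=> dens a u ub; apply: (proj2 (dens a)) => g []; apply: ub. Qed.

Section InfoAlgebraOrder.
Context {disp : Order.disp_t} {D : latticeType disp} {Phi : Type}.
Variables (comb : Phi -> Phi -> Phi) (e : Phi) (foc : Phi -> D -> Phi).
Hypothesis ia : info_algebra comb e foc.

Local Notation "a <=I b" := (ia_le comb a b) (at level 70).

Lemma ia_le_refl a : a <=I a.
Proof. by have [x fx] := foc_support ia a; rewrite /ia_le -{2}fx (foc_idem ia). Qed.

Lemma ia_le_trans a b c : a <=I b -> b <=I c -> a <=I c.
Proof. by rewrite /ia_le => ab <-; rewrite (comb_assoc ia) ab. Qed.

Lemma ia_e_le a : e <=I a.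
Proof. exact: comb_neutral ia a. Qed.

Lemma ia_le_combl a b : a <=I comb a b.
Proof. by rewrite /ia_le (comb_assoc ia) ia_le_refl. Qed.

Lemma ia_le_combr a b : b <=I comb a b.
Proof. by rewrite (comb_comm ia); apply: ia_le_combl. Qed.

Lemma ia_comb_lub a b c : a <=I c -> b <=I c -> comb a b <=I c.
Proof. by rewrite /ia_le => ac bc; rewrite -(comb_assoc ia) bc. Qed.

Lemma ia_foc_le a x : foc a x <=I a.
Proof. by rewrite /ia_le (comb_comm ia) (foc_idem ia). Qed.

Lemma ia_foc_le_mono {x} a b : a <=I b -> foc a x <=I foc b x.
Proof.
move=> ab; rewrite /ia_le -(foc_comb ia).
by rewrite (ia_le_trans (ia_foc_le a x) ab).
Qed.

Lemma way_below_le a b : way_below comb a b -> a <=I b.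
Proof.
move=> ab; have dB : directed comb (fun c => c = b).
  split=> [|_ _ -> ->]; first by exists b.
  by exists b; do !split; apply: ia_le_refl.
have sB : is_sup comb (fun c => c = b) b.
  by split=> [_ ->|u ub]; [apply: ia_le_refl | apply: ub].
by have [_ [-> //]] := ab _ _ dB sB (ia_le_refl b).
Qed.

Lemma finite_way_below a b : finite_elt comb a -> a <=I b -> way_below comb a b.
Proof. by move=> fa ab X s dX sX bs; apply: fa dX sX (ia_le_trans ab bs). Qed.

Lemma finite_gamma_ok : gamma_ok comb e (finite_elt comb).
Proof.
split=> [X s [[c Xc] _] _ _|a b fa fb X s dX sX abs]; first by exists c; split; last exact: ia_e_le.
have [c1 [Xc1 ac1]] := fa X s dX sX (ia_le_trans (ia_le_combl a b) abs).
have [c2 [Xc2 bc2]] := fb X s dX sX (ia_le_trans (ia_le_combr a b) abs).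
have [c [Xc [c1c c2c]]] := proj2 dX c1 c2 Xc1 Xc2.
exists c; split=> //.
by apply: ia_comb_lub; [exact: ia_le_trans ac1 c1c | exact: ia_le_trans bc2 c2c].
Qed.

Lemma directed_gamma_below (G : Phi -> Prop) (P : Phi -> Prop) :
  gamma_ok comb e G -> P e -> (forall a b, P a -> P b -> P (comb a b)) ->
  directed comb (fun g => G g /\ P g).
Proof.
move=> [Ge Gcomb] Pe Pcomb; split; first by exists e.
move=> a b [Ga Pa] [Gb Pb]; exists (comb a b).
by do !split; [apply: Gcomb | apply: Pcomb | apply: ia_le_combl | apply: ia_le_combr].
Qed.

Section DenseGamma.
Variable G : Phi -> Prop.
Hypotheses (G_ok : gamma_ok comb e G) (G_conv : convergency comb G)
           (G_dense : dense_below comb G).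

Lemma complete_of_dense : complete_lattice comb.
Proof.
move=> X.
pose below_ubs g := forall u, (forall a, X a -> a <=I u) -> g <=I u.
have dY : directed comb (fun g => G g /\ below_ubs g).
  apply: directed_gamma_below => // [u _|a b ha hb u ub]; first exact: ia_e_le.
  by apply: ia_comb_lub; [apply: ha | apply: hb].
have [s [ub least]] := G_conv (fun a (Ya : G a /\ below_ubs a) => proj1 Ya) dY.
exists s; split=> [a Xa|u uX]; last by apply: least => g [_]; apply.
apply: G_dense => g Gg ga; apply: ub; split=> // u uX.
exact: ia_le_trans (way_below_le ga) (uX a Xa).
Qed.

Hypothesis G_compact : compactness comb G.

Lemma gamma_finite g : G g -> finite_elt comb g.
Proof.
move=> Gg X s dX [ubX leastX] gs.
pose below_X h := exists c, X c /\ h <=I c.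
have dY : directed comb (fun h => G h /\ below_X h).
  apply: directed_gamma_below => // [|a b [c1 [Xc1 ac1]] [c2 [Xc2 bc2]]].
    by have [c Xc] := proj1 dX; exists c; split; last exact: ia_e_le.
  have [c [Xc [c1c c2c]]] := proj2 dX c1 c2 Xc1 Xc2; exists c; split=> //.
  by apply: ia_comb_lub; [exact: ia_le_trans ac1 c1c | exact: ia_le_trans bc2 c2c].
have [t supt] := G_conv (fun a (Ya : G a /\ below_X a) => proj1 Ya) dY.
have st : s <=I t.
  apply: leastX => c Xc; apply: G_dense => h Gh hc; apply: (proj1 supt); split=> //.
  by exists c; split=> //; apply: way_below_le.
have [h [[_ [c [Xc hc]]] gh]] :=
  G_compact (fun a (Ya : G a /\ below_X a) => proj1 Ya) dY supt Gg (ia_le_trans gs st).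
by exists c; split=> //; apply: ia_le_trans hc.
Qed.

End DenseGamma.

Lemma ia_continuousP : ia_continuous comb e <-> continuous_lattice comb.
Proof.
split=> [[G [G_ok [G_conv dens]]]|[compl cont]].
  split; first exact: complete_of_dense G_ok G_conv (density_dense_below dens).
  move=> a; split=> [b|u ub]; first exact: way_below_le.
  by apply: (proj2 (dens a)) => g [_]; apply: ub.
exists (fun _ => True); split; first by split.
split=> [X _ _|a]; first exact: compl.
by apply: is_sup_ext _ (cont a) => b; tauto.
Qed.

Lemma ia_compactP : ia_compact comb e <-> algebraic_lattice comb.
Proof.
split=> [[G [G_ok [G_conv [dens G_comp]]]]|[compl alg]].
  have G_dense := density_dense_below dens.
  split; first exact: complete_of_dense G_ok G_conv G_dense.
  move=> a; split=> [b []//|u ub].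
  apply: (proj2 (dens a)) => g [Gg ga]; apply: ub; split.
    exact: (gamma_finite G_ok G_conv G_dense G_comp Gg).
  exact: way_below_le.
exists (finite_elt comb); split; first exact: finite_gamma_ok.
split; first by move=> X _ _; apply: compl.
split=> [a|X s g _ dX sX fg gs]; last exact: fg dX sX gs.
split=> [g [_ ga]|u ub]; first exact: way_below_le.
by apply: (proj2 (alg a)) => b [fb ba]; apply: ub; split; last exact: finite_way_below.
Qed.

End InfoAlgebraOrder.

Section TopFocus.
Context {disp : Order.disp_t} {D : tLatticeType disp} {Phi : Type}.
Variables (comb : Phi -> Phi -> Phi) (e : Phi) (foc : Phi -> D -> Phi).
Hypothesis ia : info_algebra comb e foc.

Lemma foc_top a : foc a \top = a.
Proof. by have [x fx] := foc_support ia a; rewrite -fx (foc_foc ia) meet1x. Qed.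

Lemma strong_density_dense_below G : strong_density comb foc G -> dense_below comb G.
Proof.
move=> dens a u ub; rewrite -(foc_top a).
by apply: (proj2 (dens a \top)) => g [Gg [_]]; apply: ub.
Qed.

Lemma ia_s_continuousP :
  ia_s_continuous comb e foc <->
  complete_lattice comb /\
  forall phi x, is_sup comb (fun psi => psi = foc psi x /\ way_below comb psi phi) (foc phi x).
Proof.
split=> [[G [G_ok [G_conv dens]]]|[compl dens]].
  split; first exact: (complete_of_dense ia G_ok G_conv (strong_density_dense_below dens)).
  move=> phi x; split=> [psi [psi_x psi_phi]|u ub].
    by rewrite psi_x; exact: (ia_foc_le_mono ia (way_below_le ia psi_phi)).
  by apply: (proj2 (dens phi x)) => g [_]; apply: ub.
exists (fun _ => True); split; first by split.
split=> [X _ _|phi x]; first exact: compl.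
by apply: is_sup_ext _ (dens phi x) => b; tauto.
Qed.

Lemma ia_s_compactP :
  ia_s_compact comb e foc <->
  complete_lattice comb /\
  forall phi x, is_sup comb
    (fun psi => finite_elt comb psi /\ psi = foc psi x /\ ia_le comb psi phi) (foc phi x).
Proof.
split=> [[G [G_ok [G_conv [dens G_comp]]]]|[compl dens]].
  have G_dense := strong_density_dense_below dens.
  split; first exact: (complete_of_dense ia G_ok G_conv G_dense).
  move=> phi x; split=> [psi [_ [psi_x psi_phi]]|u ub].
    by rewrite psi_x; exact: (ia_foc_le_mono ia psi_phi).
  apply: (proj2 (dens phi x)) => g [Gg [gx g_phi]]; apply: ub; split.
    exact: (gamma_finite ia G_ok G_conv G_dense G_comp Gg).
  by split; last exact: (way_below_le ia g_phi).
exists (finite_elt comb); split; first exact: (finite_gamma_ok ia).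
split; first by move=> X _ _; apply: compl.
split=> [phi x|X s g _ dX sX fg gs]; last exact: fg dX sX gs.
split=> [g [_ [g_x g_phi]]|u ub].
  by rewrite g_x; exact: (ia_foc_le_mono ia (way_below_le ia g_phi)).
apply: (proj2 (dens phi x)) => b [fb [bx b_phi]]; apply: ub.
by split=> //; split; last exact: (finite_way_below ia fb b_phi).
Qed.

End TopFocus.

Theorem theorem3p8 (disp : Order.disp_t) (D : tLatticeType disp) (Phi : Type)
  (comb : Phi -> Phi -> Phi) (e : Phi) (foc : Phi -> D -> Phi) :
  info_algebra comb e foc ->
  ((ia_continuous comb e <-> continuous_lattice comb) /\
   (ia_compact comb e <-> algebraic_lattice comb)) /\
  ((ia_s_continuous comb e foc <->
      complete_lattice comb /\
      forall (phi : Phi) (x : D),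
        is_sup comb (fun psi => psi = foc psi x /\ way_below comb psi phi) (foc phi x)) /\
   (ia_s_compact comb e foc <->
      complete_lattice comb /\
      forall (phi : Phi) (x : D),
        is_sup comb (fun psi => finite_elt comb psi /\ psi = foc psi x /\ ia_le comb psi phi)
          (foc phi x))).
Proof.
move=> ia; split; split.
- exact: ia_continuousP ia.
- exact: ia_compactP ia.
- exact: ia_s_continuousP ia.
- exact: ia_s_compactP ia.
Qed.
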